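(* Assume the setting in the context (Condition ASM). Fix $c>1$, $\bar c=(c+1)/(c-1)$, let $\widehat\beta$ be a LASSO solution, $\widehat T=\mathrm{support}(\widehat\beta)$ and $\widehat m=|\widehat T\setminus T|$. If $\lambda\geqslant c\,n\|S\|_\infty$, then $$\sqrt{\widehat m}\leqslant\sqrt s\,\sqrt{\phi(\widehat m)}\,\frac{2\bar c}{\kappa_{\bar c}}+3(\bar c+1)\sqrt{\phi(\widehat m)}\,\frac{n c_s}{\lambda},$$ where $c_s=0$ in the parametric case $f_i=x_i'\beta_0$.
   Context: Condition ASM: observations $(y_i,z_i)$, $i=1,\dots,n$, $z_i$ fixed, $y_i=f(z_i)+\varepsilon_i$, $\varepsilon_i$ i.i.d. $N(0,\sigma^2)$; $f_i=f(z_i)$, $\mathbb{E}_n[a_i]=n^{-1}\sum_ia_i$; $x_i=P(z_i)\in\mathbb{R}^p$ (including a constant) with $\mathbb{E}_n[x_{ij}^2]=1$. $\beta_0$ is any solution of $\min_\beta\mathbb{E}_n[(f_i-x_i'\beta)^2]+\sigma^2\|\beta\|_0/n$; $s=\|\beta_0\|_0$, $T=\mathrm{support}(\beta_0)$, $c_s=\sqrt{\mathbb{E}_n[(f_i-x_i'\beta_0)^2]}\leqslant K\sigma\sqrt{s/n}$ for an absolute constant $K$. $\|\delta\|_{2,n}=\sqrt{\mathbb{E}_n[(x_i'\delta)^2]}$; $S=2\mathbb{E}_n[x_i\varepsilon_i]$; LASSO: $\widehat\beta\in\arg\min_\beta\mathbb{E}_n[(y_i-x_i'\beta)^2]+\frac\lambda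 n\|\beta\|_1$. $\delta_A$ is $\delta$ with entries outside $A$ set to zero. $\kappa_C=\min\{\sqrt s\|\delta\|_{2,n}/\|\delta_T\|_1:\|\delta_{T^c}\|_1\leqslant C\|\delta_T\|_1,\delta_T\neq0\}$. Maximal sparse eigenvalue: $\phi(m)=\max\{\|\delta\|_{2,n}^2/\|\delta\|^2:\delta\neq0,\|\delta_{T^c}\|_0\leqslant m\}$. *)

From HB Require Import structures.
From mathcomp Require Import all_boot all_order all_algebra.
From mathcomp Require Import all_classical all_reals.
Set Implicit Arguments. Unset Strict Implicit. Unset Printing Implicit Defensive.
Import Order.TTheory GRing.Theory Num.Theory.
Local Open Scope ring_scope.
Local Open Scope classical_set_scope.

Section LassoDefs.
Variables (R : realType) (n p : nat).

Definition En (a : 'I_n -> R) : R := (\sum_(i < n) a i) / n%:R.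

Definition xb (X : 'M[R]_(n, p)) (i : 'I_n) (b : 'I_p -> R) : R :=
  \sum_(j < p) X i j * b j.

Definition norm2n (X : 'M[R]_(n, p)) (d : 'I_p -> R) : R :=
  Num.sqrt (En (fun i => (xb X i d) ^+ 2)).

Definition l1norm (b : 'I_p -> R) : R := \sum_(j < p) `|b j|.
Definition l2sq (b : 'I_p -> R) : R := \sum_(j < p) b j ^+ 2.
Definition supp (b : 'I_p -> R) : {set 'I_p} := [set j | b j != 0].
Definition l0norm (b : 'I_p -> R) : nat := #|supp b|.
Definition linfnorm (b : 'I_p -> R) : R := \big[Num.max/0]_(j < p) `|b j|.

Definition restr (A : {set 'I_p}) (d : 'I_p -> R) : 'I_p -> R :=
  fun j => if j \in A then d j else 0.

Definition lasso_obj (X : 'M[R]_(n, p)) (y : 'I_n -> R) (lam : R)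
  (b : 'I_p -> R) : R :=
  En (fun i => (y i - xb X i b) ^+ 2) + lam / n%:R * l1norm b.

Definition oracle_obj (X : 'M[R]_(n, p)) (f : 'I_n -> R) (sigma : R)
  (b : 'I_p -> R) : R :=
  En (fun i => (f i - xb X i b) ^+ 2) + sigma ^+ 2 * (l0norm b)%:R / n%:R.

Definition cs (X : 'M[R]_(n, p)) (f : 'I_n -> R) (b0 : 'I_p -> R) : R :=
  Num.sqrt (En (fun i => (f i - xb X i b0) ^+ 2)).

Definition score (X : 'M[R]_(n, p)) (eps : 'I_n -> R) : 'I_p -> R :=
  fun j => 2 * En (fun i => X i j * eps i).

(* restricted eigenvalue kappa_C (minimum taken as infimum) *)
Definition kappa (X : 'M[R]_(n, p)) (T : {set 'I_p}) (C : R) : R :=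
  inf [set k : R | exists d : 'I_p -> R,
         [/\ l1norm (restr (~: T) d) <= C * l1norm (restr T d),
             restr T d <> (fun _ => 0) &
             k = Num.sqrt (#|T|%:R) * norm2n X d / l1norm (restr T d)]].

(* maximal sparse eigenvalue phi(m) (maximum taken as supremum) *)
Definition phi (X : 'M[R]_(n, p)) (T : {set 'I_p}) (m : nat) : R :=
  sup [set r : R | exists d : 'I_p -> R,
         [/\ d <> (fun _ => 0),
             (l0norm (restr (~: T) d) <= m)%N &
             r = norm2n X d ^+ 2 / l2sq d]].

End LassoDefs.

(* Let d = bhat - b0, q = ||d||_{2,n} and L = lam/n.  Comparing the LASSO objective at
   bhat and at b0 and using ||S||_oo <= L/c gives
   c q (q - 2 c_s) <= (c+1) L ||d_T||_1 - (c-1) L ||d_{T^c}||_1,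
   so either q <= 2 c_s or d lies in the restricted cone with constant cbar; in both
   cases the restricted eigenvalue yields q <= 2 c_s + (c+1) L sqrt s / (c kappa).
   On the other hand the optimality conditions of the LASSO force every selected
   coordinate j to satisfy |w_j| >= L - ||S||_oo >= (c-1) L / c, where
   w_j = 2 E_n[x_ij (f_i - x_i'bhat)].  The vector a = w restricted to the mhat
   selected coordinates outside T thus has ||a||^2 >= mhat ((c-1) L / c)^2, while
   ||a||^2 = 2 E_n[x_i'a (f_i - x_i'bhat)] <= 2 ||a||_{2,n} (c_s + q)
           <= 2 sqrt(phi(mhat)) ||a|| (c_s + q)
   by Cauchy-Schwarz. *)
From HB Require Import structures.
From mathcomp Require Import all_boot all_order all_algebra.
From mathcomp Require Import all_classical all_reals.
From mathcomp Require Import ring lra.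
Set Implicit Arguments. Unset Strict Implicit. Unset Printing Implicit Defensive.
Import Order.TTheory GRing.Theory Num.Theory.
Local Open Scope ring_scope.

Section CauchySchwarz.
Variable R : rcfType.

Lemma sumr_mul_sqr_le (I : finType) (a b : I -> R) :
  (\sum_i a i * b i) ^+ 2 <= (\sum_i a i ^+ 2) * (\sum_i b i ^+ 2).
Proof.
set A := \sum_i a i ^+ 2; set B := \sum_i b i ^+ 2; set C := \sum_i a i * b i.
have B_ge0 : 0 <= B by apply: sumr_ge0 => i _; exact: sqr_ge0.
have A_ge0 : 0 <= A by apply: sumr_ge0 => i _; exact: sqr_ge0.
have discr : 0 <= B * (A * B - C ^+ 2).
  have -> : B * (A * B - C ^+ 2) = \sum_i (B * a i - C * b i) ^+ 2.
    have -> : \sum_i (B * a i - C * b i) ^+ 2 =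
      \sum_i (B ^+ 2 * a i ^+ 2 + (- (2 * B * C)) * (a i * b i) + C ^+ 2 * b i ^+ 2).
      by apply: eq_bigr => i _; ring.
    rewrite !big_split /= -!mulr_sumr -/A -/B -/C; ring.
  by apply: sumr_ge0 => i _; exact: sqr_ge0.
have [B0|B_neq0] := eqVneq B 0; last first.
  have B_gt0 : 0 < B by rewrite lt_def B_neq0 B_ge0.
  nra.
have b0 i : b i = 0.
  apply/eqP; rewrite -sqrf_eq0; apply/eqP.
  by apply: (psumr_eq0P (P := predT) (F := fun k => b k ^+ 2)) => // k _; exact: sqr_ge0.
have -> : C = 0 by apply: big1 => i _; rewrite b0 mulr0.
by rewrite expr0n /= mulr_ge0.
Qed.

Lemma normr_le_sqrtM (x u v : R) : 0 <= u -> 0 <= v -> x ^+ 2 <= u * v ->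
  `|x| <= Num.sqrt u * Num.sqrt v.
Proof.
move=> u_ge0 v_ge0 le_xuv.
by rewrite -sqrtrM // -sqrtr_sqr ler_sqrt // mulr_ge0.
Qed.

End CauchySchwarz.

Lemma ler_of_forall_ltr_mul (R : realFieldType) (x y z : R) : 0 <= z ->
  (forall t, 0 < t -> t < 1 -> x <= y + t * z) -> x <= y.
Proof.
move=> z_ge0 le_xyz; apply/ler_addgt0Pr => e e_gt0.
have ez_gt0 : 0 < e + z + 1 by lra.
set t := e / (e + z + 1).
have t_gt0 : 0 < t by rewrite divr_gt0.
have t_lt1 : t < 1 by rewrite ltr_pdivrMr // mul1r; lra.
have tz_le : t * z <= e.
  rewrite mulrAC ler_pdivrMr //; nra.
by apply: le_trans (le_xyz t t_gt0 t_lt1) _; rewrite lerD2l.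
Qed.

Section EmpiricalMean.
Variables (R : realType) (n : nat).
Implicit Types a b : 'I_n -> R.

Lemma eq_En a b : a =1 b -> En a = En b.
Proof. by move=> eq_ab; rewrite /En (eq_bigr _ (fun i _ => eq_ab i)). Qed.

Lemma EnD a b : En (fun i => a i + b i) = En a + En b.
Proof. by rewrite /En big_split mulrDl. Qed.

Lemma EnB a b : En (fun i => a i - b i) = En a - En b.
Proof. by rewrite /En sumrB mulrBl. Qed.

Lemma EnZ k a : En (fun i => k * a i) = k * En a.
Proof. by rewrite /En -mulr_sumr mulrA. Qed.

Lemma En_ge0 a : (forall i, 0 <= a i) -> 0 <= En a.
Proof. by move=> a_ge0; rewrite /En divr_ge0 // sumr_ge0. Qed.

Lemma ler_En a b : (forall i, a i <= b i) -> En a <= En b.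
Proof. by move=> le_ab; rewrite -subr_ge0 -EnB En_ge0 // => i; rewrite subr_ge0. Qed.

Lemma En_sqr_ge0 a : 0 <= En (fun i => a i ^+ 2).
Proof. by apply: En_ge0 => i; exact: sqr_ge0. Qed.

Lemma En_mul_le a b : En (fun i => a i * b i) <=
   Num.sqrt (En (fun i => a i ^+ 2)) * Num.sqrt (En (fun i => b i ^+ 2)).
Proof.
apply: le_trans (ler_norm _) _; apply: normr_le_sqrtM; rewrite ?En_sqr_ge0 //.
rewrite /En expr_div_n mulrACA -invfM -expr2.
by rewrite ler_wpM2r ?invr_ge0 ?sqr_ge0 ?sumr_mul_sqr_le.
Qed.

End EmpiricalMean.

Section Design.
Variables (R : realType) (n p : nat) (X : 'M[R]_(n, p)).
Implicit Types (b d : 'I_p -> R) (T : {set 'I_p}).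

Lemma xbB i b1 b2 : xb X i (fun j => b1 j - b2 j) = xb X i b1 - xb X i b2.
Proof. by rewrite /xb -sumrB; apply: eq_bigr => j _; rewrite mulrBr. Qed.

Lemma En_xb_mul d (v : 'I_n -> R) :
  En (fun i => xb X i d * v i) = \sum_j d j * En (fun i => X i j * v i).
Proof.
rewrite /En /xb; under eq_bigr do rewrite mulr_suml.
rewrite exchange_big /= mulr_suml; apply: eq_bigr => j _.
by rewrite mulrA mulr_sumr; congr (_ * _); apply: eq_bigr => i _; ring.
Qed.

Lemma xb_sub_coord i b j t :
  xb X i (fun k => b k - (k == j)%:R * t) = xb X i b - X i j * t.
Proof.
rewrite xbB; congr (_ - _); rewrite /xb (bigD1 j) //= eqxx mul1r big1 ?addr0 //.
by move=> k /negPf ->; rewrite mul0r mulr0.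
Qed.

Lemma l1norm_shrink_coord b j t : 0 <= t <= 1 ->
  l1norm (fun k => b k - (k == j)%:R * (t * b j)) = l1norm b - t * `|b j|.
Proof.
move=> /andP [t_ge0 t_le1].
rewrite /l1norm (bigD1 j) //= [in RHS](bigD1 j) //= eqxx mul1r.
have -> : b j - t * b j = (1 - t) * b j by ring.
rewrite normrM ger0_norm ?subr_ge0 //.
under eq_bigr => k /negPf -> do rewrite mul0r subr0.
ring.
Qed.

Lemma l1norm_restr_split T d :
  l1norm d = l1norm (restr T d) + l1norm (restr (~: T) d).
Proof.
rewrite /l1norm -big_split; apply: eq_bigr => j _; rewrite /restr !inE.
by case: (j \in T) => /=; rewrite normr0 ?addr0 ?add0r.
Qed.

(* The triangle inequality, coordinatewise on supp b0 and exactly off it. *)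
Lemma l1norm_subr_le_restr b0 b :
  l1norm b0 - l1norm b <=
  l1norm (restr (supp b0) (fun j => b j - b0 j))
  - l1norm (restr (~: supp b0) (fun j => b j - b0 j)).
Proof.
rewrite /l1norm -!sumrB; apply: ler_sum => j _; rewrite /restr /supp !inE.
have [->|_] /= := eqVneq (b0 j) 0; first by rewrite subr0 normr0 sub0r.
by rewrite normr0 subr0 distrC lerB_dist.
Qed.

Lemma norm2n_sqr d : norm2n X d ^+ 2 = En (fun i => xb X i d ^+ 2).
Proof. by rewrite /norm2n sqr_sqrtr // En_sqr_ge0. Qed.

Lemma l2sq_gt0 d : d <> (fun _ => 0) -> 0 < l2sq d.
Proof.
move=> d_neq0; rewrite lt_def sumr_ge0 ?andbT => [|j _]; last exact: sqr_ge0.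
apply/eqP => l2_eq0; apply: d_neq0; apply: funext => j; apply/eqP.
rewrite -sqrf_eq0; apply/eqP.
by apply: (psumr_eq0P (P := predT) (F := fun k => d k ^+ 2)) => // k _; exact: sqr_ge0.
Qed.

Lemma norm2n_sqr_le_phi T m d : d <> (fun _ => 0) ->
  (l0norm (restr (~: T) d) <= m)%N ->
  norm2n X d ^+ 2 <= phi X T m * l2sq d /\ 0 <= phi X T m.
Proof.
move=> d_neq0 d_sparse; rewrite /phi; set E := (E in sup E).
have E_ub : has_ubound E.
  exists (En (fun i => \sum_j X i j ^+ 2)) => r [d' [d'_neq0 _ ->]].
  rewrite ler_pdivrMr ?l2sq_gt0 // norm2n_sqr mulrC -EnZ; apply: ler_En => i.
  by rewrite mulrC /xb /l2sq; exact: (sumr_mul_sqr_le (fun j => X i j) d').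
have E_d : E (norm2n X d ^+ 2 / l2sq d) by exists d.
have le_sup := ub_le_sup E_ub E_d.
have l2_gt0 := l2sq_gt0 d_neq0.
split; first by rewrite -ler_pdivrMr.
by apply: le_trans le_sup; rewrite divr_ge0 ?sqr_ge0 ?ltW.
Qed.

Lemma kappa_le T C d :
  l1norm (restr (~: T) d) <= C * l1norm (restr T d) ->
  restr T d <> (fun _ => 0) ->
  kappa X T C <= Num.sqrt (#|T|%:R) * norm2n X d / l1norm (restr T d).
Proof.
move=> d_cone dT_neq0; apply: ge_inf; last by exists d.
exists 0 => k [d' [_ _ ->]].
by rewrite divr_ge0 ?mulr_ge0 ?sqrtr_ge0 ?sumr_ge0.
Qed.

(* Shrinking the j-th coordinate of a minimizer by the factor (1 - t) and letting
   t -> 0 gives the subgradient condition at a nonzero coordinate. *)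
Lemma lasso_kkt (y : 'I_n -> R) lam bhat :
  (forall j, En (fun i => X i j ^+ 2) = 1) ->
  (forall b, lasso_obj X y lam bhat <= lasso_obj X y lam b) ->
  forall j, j \in supp bhat ->
  lam / n%:R <= `|2 * En (fun i => X i j * (y i - xb X i bhat))|.
Proof.
move=> X_normed bhat_opt j; rewrite inE => bj_neq0.
set u := fun i => y i - xb X i bhat.
set g := En (fun i => X i j * u i).
set L := lam / n%:R.
have shrink t : 0 < t -> t < 1 -> L * `|bhat j| <= 2 * bhat j * g + t * bhat j ^+ 2.
  move=> t_gt0 t_lt1.
  have := bhat_opt (fun k => bhat k - (k == j)%:R * (t * bhat j)).
  rewrite /lasso_obj l1norm_shrink_coord; last by rewrite !ltW.
  have -> : En (fun i => (y i - xb X i (fun k => bhat k - (k == j)%:R * (t * bhat j))) ^+ 2)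
      = En (fun i => u i ^+ 2) + 2 * t * bhat j * g
        + (t * bhat j) ^+ 2 * En (fun i => X i j ^+ 2).
    by rewrite /g -!EnZ -!EnD; apply: eq_En => i; rewrite xb_sub_coord /u; ring.
  by rewrite X_normed mulr1 -/L; nra.
have le_Lg := ler_of_forall_ltr_mul (sqr_ge0 (bhat j)) shrink.
have le_g : 2 * bhat j * g <= `|bhat j| * `|2 * g|.
  by rewrite -normrM (_ : bhat j * (2 * g) = 2 * bhat j * g) ?ler_norm //; ring.
have bj_gt0 : 0 < `|bhat j| by rewrite normr_gt0.
nra.
Qed.

End Design.

Section LassoSupport.
Variables (R : realType) (n p : nat) (X : 'M[R]_(n, p)).
Variables (f eps : 'I_n -> R) (b0 bhat : 'I_p -> R) (lam c : R).
Hypotheses (n_gt0 : (0 < n)%N) (c_gt1 : 1 < c) (lam_gt0 : 0 < lam).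
Hypothesis X_normed : forall j, En (fun i => X i j ^+ 2) = 1.
Hypothesis bhat_opt : forall b,
  lasso_obj X (fun i => f i + eps i) lam bhat <= lasso_obj X (fun i => f i + eps i) lam b.
Hypothesis lam_ge : c * n%:R * linfnorm (score X eps) <= lam.

Local Notation L := (lam / n%:R).
Local Notation sinf := (linfnorm (score X eps)).
Local Notation T := (supp b0).
Local Notation cbar := ((c + 1) / (c - 1)).
Local Notation delta := (fun j => bhat j - b0 j).
Local Notation q := (norm2n X delta).
Local Notation cs0 := (cs X f b0).
Local Notation dT := (l1norm (restr T delta)).
Local Notation dTc := (l1norm (restr (~: T) delta)).
Local Notation resid := (fun i => f i - xb X i bhat).
Local Notation w j := (2 * En (fun i => X i j * resid i)).
Local Notation M := (supp bhat :\: T).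
Local Notation mhat := #|M|.

Let c_gt0 : 0 < c.
Proof. exact: lt_trans ltr01 c_gt1. Qed.

Let L_gt0 : 0 < L.
Proof. by rewrite divr_gt0 ?ltr0n. Qed.

Let csinf_le : c * sinf <= L.
Proof. by rewrite ler_pdivlMr ?ltr0n // mulrAC. Qed.

Let dTc_term_ge0 : 0 <= (c - 1) * L * dTc.
Proof.
by apply: mulr_ge0 (sumr_ge0 _ _) => //; apply: mulr_ge0 (ltW L_gt0); rewrite subr_ge0 ltW.
Qed.

Let L_le_gap : (c - 1) / c * L <= L - sinf.
Proof.
have -> : (c - 1) / c * L = L - L / c.
  by field; rewrite (gt_eqF c_gt0) pnatr_eq0 -lt0n n_gt0.
by rewrite lerD2l lerN2 ler_pdivlMr // mulrC.
Qed.

Let gap_gt0 : 0 < L - sinf.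
Proof.
apply: lt_le_trans L_le_gap; apply: mulr_gt0 L_gt0; apply: divr_gt0 c_gt0.
by rewrite subr_gt0.
Qed.

Let cs0_ge0 : 0 <= cs0.
Proof. exact: sqrtr_ge0. Qed.

Let q_ge0 : 0 <= q.
Proof. exact: sqrtr_ge0. Qed.

Let dT_ge0 : 0 <= dT.
Proof. exact: sumr_ge0. Qed.

Let dTc_ge0 : 0 <= dTc.
Proof. exact: sumr_ge0. Qed.

Lemma lasso_basic_ineq : q ^+ 2 <= sinf * (dT + dTc) + 2 * q * cs0 + L * (dT - dTc).
Proof.
have := bhat_opt b0; rewrite /lasso_obj.
have xb_bhat i : xb X i bhat = xb X i b0 + xb X i delta by rewrite xbB; ring.
have -> : En (fun i => (f i + eps i - xb X i bhat) ^+ 2) =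
    En (fun i => (f i + eps i - xb X i b0) ^+ 2) + q ^+ 2
    - 2 * En (fun i => xb X i delta * eps i)
    - 2 * En (fun i => xb X i delta * (f i - xb X i b0)).
  by rewrite norm2n_sqr -!EnZ -EnD -!EnB; apply: eq_En => i; rewrite xb_bhat; ring.
have noise : 2 * En (fun i => xb X i delta * eps i) <= sinf * (dT + dTc).
  rewrite En_xb_mul mulr_sumr -l1norm_restr_split /l1norm mulr_sumr.
  apply: ler_sum => j _; rewrite mulrCA; apply: le_trans (ler_norm _) _.
  rewrite normrM mulrC ler_wpM2r //.
  exact: le_bigmax (fun k => `|score X eps k|) j.
have approx : En (fun i => xb X i delta * (f i - xb X i b0)) <= q * cs0 by exact: En_mul_le.
have penalty : L * l1norm b0 - L * l1norm bhat <= L * (dT - dTc).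
  by rewrite -mulrBr; apply: ler_wpM2l; [exact: ltW | exact: l1norm_subr_le_restr].
lra.
Qed.

Lemma lasso_cone_ineq : c * (q * (q - 2 * cs0)) <= (c + 1) * L * dT - (c - 1) * L * dTc.
Proof.
have noise : c * (sinf * (dT + dTc)) <= L * (dT + dTc).
  by rewrite mulrA ler_wpM2r ?addr_ge0.
have := ler_wpM2l (ltW c_gt0) lasso_basic_ineq; nra.
Qed.

Lemma lasso_restricted_cone : 2 * cs0 < q -> 0 < dT /\ dTc <= cbar * dT.
Proof.
move=> q_gt; have cone := lasso_cone_ineq.
have q_gt0 : 0 < q by move: cs0_ge0; lra.
have pos : 0 < c * (q * (q - 2 * cs0)) by rewrite !mulr_gt0 // subr_gt0.
have dT_term_gt0 : 0 < (c + 1) * L * dT by move: dTc_term_ge0; lra.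
split; first by move: dT_term_gt0; rewrite pmulr_rgt0 // mulr_gt0 // addr_gt0.
rewrite mulrAC ler_pdivlMr ?subr_gt0 // mulrC -(ler_pM2r L_gt0).
by move: dTc_term_ge0; lra.
Qed.

Lemma lasso_prediction_rate : 0 < kappa X T cbar ->
  c * kappa X T cbar * (q - 2 * cs0) <= (c + 1) * L * Num.sqrt (#|T|%:R).
Proof.
set K := kappa X T cbar => K_gt0.
have rhs_ge0 : 0 <= (c + 1) * L * Num.sqrt (#|T|%:R).
  by rewrite mulr_ge0 ?sqrtr_ge0 // mulr_ge0 ?addr_ge0 ?ltW.
have [q_le|q_gt] := lerP q (2 * cs0).
  apply: le_trans rhs_ge0; apply: mulr_ge0_le0; last by rewrite subr_le0.
  exact: ltW (mulr_gt0 c_gt0 K_gt0).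
have [dT_gt0 cone] := lasso_restricted_cone q_gt.
have dT_neq0 : restr T delta <> (fun _ => 0).
  by move=> dT_eq0; move: dT_gt0; rewrite dT_eq0 /l1norm big1 ?ltxx // => j _; rewrite normr0.
have K_le : K * dT <= Num.sqrt (#|T|%:R) * q by rewrite -ler_pdivlMr ?kappa_le.
have q_gt0 : 0 < q by move: cs0_ge0; lra.
rewrite -(ler_pM2l q_gt0); apply: (@le_trans _ _ (K * ((c + 1) * L * dT))).
  have -> : q * (c * K * (q - 2 * cs0)) = K * (c * (q * (q - 2 * cs0))) by ring.
  apply: ler_wpM2l; first exact: ltW.
  by apply: le_trans lasso_cone_ineq _; rewrite lerBlDr lerDl.
have -> : K * ((c + 1) * L * dT) = (c + 1) * L * (K * dT) by ring.
have -> : q * ((c + 1) * L * Num.sqrt (#|T|%:R)) = (c + 1) * L * (Num.sqrt (#|T|%:R) * q).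
  by ring.
by apply: ler_wpM2l; rewrite // mulr_ge0 ?addr_ge0 ?ltW.
Qed.

Lemma lasso_kkt_gap j : j \in supp bhat -> L - sinf <= `|w j|.
Proof.
move=> j_sel; have := lasso_kkt X_normed bhat_opt j_sel.
have -> : 2 * En (fun i => X i j * (f i + eps i - xb X i bhat)) = score X eps j + w j.
  by rewrite /score -mulrDr -EnD; congr (_ * _); apply: eq_En => i; ring.
move=> /le_trans/(_ (ler_normD _ _)).
have : `|score X eps j| <= sinf by exact: le_bigmax (fun k => `|score X eps k|) j.
lra.
Qed.

Lemma lasso_selected_l2sq_ge :
  mhat%:R * (L - sinf) ^+ 2 <= l2sq (restr M (fun j => w j)).
Proof.
rewrite /l2sq -sum1_card natr_sum mulr_suml big_mkcond /=.
apply: ler_sum => j _; rewrite /restr; case: ifP => j_sel; last by rewrite expr0n.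
have gap : L - sinf <= `|w j|.
  by apply: lasso_kkt_gap; move: j_sel; rewrite inE => /andP [].
rewrite mul1r -(real_normK (num_real (w j))).
by rewrite lerXn2r ?nnegrE ?normr_ge0 ?(ltW gap_gt0).
Qed.

Lemma lasso_selected_l2sq_le :
  l2sq (restr M (fun j => w j)) <= 2 * norm2n X (restr M (fun j => w j)) * (cs0 + q).
Proof.
set a := restr M (fun j => w j).
have -> : l2sq a = 2 * En (fun i => xb X i a * resid i).
  rewrite En_xb_mul /l2sq mulr_sumr; apply: eq_bigr => j _.
  by rewrite /a /restr; case: ifP => _; ring.
have -> : En (fun i => xb X i a * resid i) =
    En (fun i => xb X i a * (f i - xb X i b0)) + En (fun i => xb X i a * - xb X i delta).
  by rewrite -EnD; apply: eq_En => i; rewrite xbB; ring.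
have approx : En (fun i => xb X i a * (f i - xb X i b0)) <= norm2n X a * cs0.
  exact: En_mul_le.
have fit : En (fun i => xb X i a * - xb X i delta) <= norm2n X a * q.
  apply: le_trans (En_mul_le _ _) _.
  by rewrite /norm2n (eq_En (fun i => sqrrN (xb X i delta))).
have := sqrtr_ge0 (En (fun i => xb X i a ^+ 2)); rewrite -/(norm2n X a).
lra.
Qed.

Lemma lasso_sparsity_bound :
  Num.sqrt (mhat%:R) * (L - sinf) <= 2 * Num.sqrt (phi X T mhat) * (cs0 + q).
Proof.
set a := restr M (fun j => w j); set F := Num.sqrt (phi X T mhat).
have [m_eq0|m_neq0] := eqVneq mhat 0%N.
  rewrite m_eq0 sqrtr0 mul0r; apply: mulr_ge0 (addr_ge0 cs0_ge0 q_ge0).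
  exact: mulr_ge0 (ler0n _ 2) (sqrtr_ge0 _).
have P_gt0 : 0 < l2sq a.
  apply: lt_le_trans lasso_selected_l2sq_ge.
  by rewrite mulr_gt0 ?exprn_gt0 // ltr0n lt0n.
have a_neq0 : a <> (fun _ => 0).
  by move=> a_eq0; move: P_gt0; rewrite a_eq0 /l2sq big1 ?ltxx // => j _; rewrite expr0n.
have a_sparse : (l0norm (restr (~: T) a) <= mhat)%N.
  rewrite /l0norm; apply: subset_leq_card; apply/fintype.subsetP => j.
  rewrite /supp /a /restr !inE; case: ifP => _; last by rewrite eqxx.
  by case: ifP => [/andP [_ ->] // | _]; rewrite eqxx.
have [phi_a phi_ge0] := norm2n_sqr_le_phi X a_neq0 a_sparse.
have a_le : norm2n X a <= F * Num.sqrt (l2sq a).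
  by apply: le_trans (ler_norm _) _; apply: normr_le_sqrtM => //; exact: ltW.
have sqrtP_le : Num.sqrt (l2sq a) <= 2 * F * (cs0 + q).
  have sqrtP_gt0 : 0 < Num.sqrt (l2sq a) by rewrite sqrtr_gt0.
  rewrite -(ler_pM2l sqrtP_gt0) -expr2 sqr_sqrtr ?(ltW P_gt0) //.
  apply: le_trans lasso_selected_l2sq_le _.
  have -> : Num.sqrt (l2sq a) * (2 * F * (cs0 + q)) =
    2 * (F * Num.sqrt (l2sq a)) * (cs0 + q) by ring.
  by apply: ler_wpM2r; [exact: addr_ge0 | apply: ler_wpM2l].
apply: le_trans sqrtP_le.
rewrite -(ger0_norm (ltW gap_gt0)) -sqrtr_sqr -sqrtrM ?ler0n // ler_sqrt.
  exact: lasso_selected_l2sq_ge.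
exact: ltW.
Qed.

Lemma lasso_support_size_bound : 0 < kappa X T cbar ->
  Num.sqrt (mhat%:R) <=
    Num.sqrt (#|T|%:R) * Num.sqrt (phi X T mhat) * (2 * cbar / kappa X T cbar)
    + 3 * (cbar + 1) * Num.sqrt (phi X T mhat) * (n%:R * cs0 / lam).
Proof.
set K := kappa X T cbar; set F := Num.sqrt (phi X T mhat) => K_gt0.
set Z := (c + 1) * L * Num.sqrt (#|T|%:R) / (c * K).
set k := c / ((c - 1) * L).
have c1_gt0 : 0 < c - 1 by rewrite subr_gt0.
have n_neq0 : n%:R != 0 :> R by rewrite pnatr_eq0 -lt0n.
have k_ge0 : 0 <= k by apply: divr_ge0 (ltW c_gt0) (mulr_ge0 (ltW c1_gt0) (ltW L_gt0)).
have q_le : q <= 2 * cs0 + Z.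
  by rewrite -lerBlDl ler_pdivlMr ?mulr_gt0 // mulrC lasso_prediction_rate.
have gap_ge : 1 <= (L - sinf) * k.
  have one_eq : (c - 1) / c * L * k = 1.
    by rewrite /k; field; rewrite n_neq0 !gt_eqF.
  by rewrite -{1}one_eq; apply: ler_wpM2r.
have -> : Num.sqrt (#|T|%:R) * F * (2 * cbar / K) + 3 * (cbar + 1) * F * (n%:R * cs0 / lam)
    = 2 * F * (3 * cs0 + Z) * k.
  by rewrite /Z /k; field; rewrite n_neq0 !gt_eqF.
apply: le_trans (_ : Num.sqrt (mhat%:R) * ((L - sinf) * k) <= _).
  by rewrite ler_peMr ?sqrtr_ge0.
rewrite mulrA; apply: (ler_wpM2r k_ge0); apply: le_trans lasso_sparsity_bound _.
apply: ler_wpM2l; first by rewrite mulr_ge0 ?sqrtr_ge0.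
by move: cs0_ge0 q_le; lra.
Qed.

End LassoSupport.

Theorem lemma5 (R : realType) (n p : nat) (X : 'M[R]_(n, p))
  (f eps : 'I_n -> R) (sigma K : R) (b0 bhat : 'I_p -> R) (lam c : R) :
  (0 < n)%N ->
  0 < sigma ->
  (forall j : 'I_p, En (fun i => X i j ^+ 2) = 1) ->
  (exists j : 'I_p, forall i : 'I_n, X i j = 1) ->
  (forall b : 'I_p -> R, oracle_obj X f sigma b0 <= oracle_obj X f sigma b) ->
  cs X f b0 <= K * sigma * Num.sqrt ((l0norm b0)%:R / n%:R) ->
  (forall b : 'I_p -> R,
     lasso_obj X (fun i => f i + eps i) lam bhat
       <= lasso_obj X (fun i => f i + eps i) lam b) ->
  1 < c ->
  0 < lam ->
  c * n%:R * linfnorm (score X eps) <= lam ->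
  let cbar := (c + 1) / (c - 1) in
  let T := supp b0 in
  let s := l0norm b0 in
  let mhat := #|supp bhat :\: T| in
  0 < kappa X T cbar ->
  Num.sqrt (mhat%:R) <=
    Num.sqrt (s%:R) * Num.sqrt (phi X T mhat) * (2 * cbar / kappa X T cbar)
    + 3 * (cbar + 1) * Num.sqrt (phi X T mhat) * (n%:R * cs X f b0 / lam).
Proof.
move=> n_gt0 _ X_normed _ _ _ bhat_opt c_gt1 lam_gt0 lam_ge cbar T s mhat.
exact: lasso_support_size_bound.
Qed.
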